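(* Let $X=(\mathbb{R}^n,\|\cdot\|)$ be an $n$-dimensional real CL-space with an absolute norm. Then an element $(|a_1|,\dots,|a_n|)\in S_X$ is a point of upper monotonicity of $X$ if and only if $(|a_1|,\dots,|a_n|)$ is a convex combination of extreme points of $B_X$ all of whose coordinates are nonnegative real numbers.
   Context: A norm on $\mathbb{R}^n$ is absolute if $\|(a_1,\dots,a_n)\|=\|(|a_1|,\dots,|a_n|)\|$ for all scalars and $\|e_j\|=1$ for the canonical basis vectors; $X$ is regarded as a Banach lattice with the coordinatewise order. A Banach space is a CL-space if its unit ball is the absolutely convex hull of every maximal convex subset of its unit sphere; in finite dimensions, equivalently, $|x^*(x)|=1$ for every extreme point $x^*$ of $B_{X^*}$ and every extreme point $x$ of $B_X$. A point $x\in S_X$ with $x\ge0$ is a point of upper monotonicity of $X$ if $\|x+y\|>\|x\|$ for every $y\ge0$ with $y\ne0$. *)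

From Stdlib Require Import Reals.
From mathcomp Require Import all_boot.
Set Implicit Arguments. Unset Strict Implicit. Unset Printing Implicit Defensive.
Open Scope R_scope.

Definition vec (n : nat) := 'I_n -> R.

Definition vzero n : vec n := fun _ => 0.
Definition vadd n (x y : vec n) : vec n := fun i => x i + y i.
Definition vscale n (a : R) (x : vec n) : vec n := fun i => a * x i.
Definition vabs n (x : vec n) : vec n := fun i => Rabs (x i).
Definition unitv n (j : 'I_n) : vec n := fun i => if i == j then 1 else 0.
Definition vnonneg n (x : vec n) : Prop := forall i, 0 <= x i.

Definition is_norm n (N : vec n -> R) : Prop :=
  (forall x, 0 <= N x) /\
  (forall x, N x = 0 -> x = @vzero n) /\
  (forall a x, N (vscale a x) = Rabs a * N x) /\
  (forall x y, N (vadd x y) <= N x + N y).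

Definition absolute_norm n (N : vec n -> R) : Prop :=
  (forall x, N x = N (vabs x)) /\ (forall j, N (unitv j) = 1).

Definition unit_ball n (N : vec n -> R) (x : vec n) : Prop := N x <= 1.
Definition unit_sphere n (N : vec n -> R) (x : vec n) : Prop := N x = 1.

Definition extreme_point n (S : vec n -> Prop) (x : vec n) : Prop :=
  S x /\ forall y z t, S y -> S z -> 0 < t < 1 ->
    x = vadd (vscale t y) (vscale (1 - t) z) -> y = z.

(* linear functionals on R^n, represented by their coefficient vectors *)
Definition apply_fun n (c x : vec n) : R := \big[Rplus/0]_(i < n) (c i * x i).

Definition dual_ball n (N : vec n -> R) (c : vec n) : Prop :=
  forall x, Rabs (apply_fun c x) <= N x.

Definition CL_space n (N : vec n -> R) : Prop :=
  forall c x, extreme_point (dual_ball N) c -> extreme_point (unit_ball N) x ->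
    Rabs (apply_fun c x) = 1.

Definition upper_monotone_point n (N : vec n -> R) (x : vec n) : Prop :=
  unit_sphere N x /\ vnonneg x /\
  forall y, vnonneg y -> y <> @vzero n -> N (vadd x y) > N x.

Definition convex_comb_of n (P : vec n -> Prop) (x : vec n) : Prop :=
  exists (k : nat) (lam : 'I_k -> R) (p : 'I_k -> vec n),
    (forall j, 0 <= lam j) /\ \big[Rplus/0]_(j < k) lam j = 1 /\
    (forall j, P (p j)) /\
    (forall i, x i = \big[Rplus/0]_(j < k) (lam j * p j i)).

(* Both directions rest on Minkowski's theorem (finite-dimensional
   Krein-Milman): a convex set K in which every ray from a point of K has a last
   point in K is the convex hull of its extreme points.  It is proved by face
   descent: a non-extreme u has a two-sided direction d; u splits between the
   two ends of the maximal segment through u along d, where d is no longer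
   two-sided.  Collecting the directions used gives a free family whose span
   avoids the two-sided directions at the current point, so the descent stops
   after at most n steps (a k x n matrix with k > n has a nontrivial kernel).
   The theorem applies to B_X and to the dual ball B_{X*}.

   As N is absolute, |q| is extreme in B_X (resp. B_{X*}) when q is.
   (=>) If |a| = sum lam_j q_j with q_j extreme, then w = sum lam_j |q_j| >= |a|
   and N w <= 1, so upper monotonicity forces w = |a|.
   (<=) Given y >= 0 with y_i > 0, the functional e_i lies in B_{X*}, hence some
   extreme c of B_{X*} has c_i <> 0.  By the CL property |c| equals 1 at every
   nonnegative extreme point of B_X, hence at |a|, so N (|a| + y) >= 1 + |c_i| y_i > 1. *)

From Stdlib Require Import Reals Lra Classical FunctionalExtensionality.
From mathcomp Require Import all_boot all_algebra Rstruct.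
Set Implicit Arguments. Unset Strict Implicit. Unset Printing Implicit Defensive.
Import GRing.Theory Num.Theory.
Open Scope R_scope.

Lemma vec_ext n (x y : vec n) : (forall i, x i = y i) -> x = y.
Proof. exact: functional_extensionality. Qed.

Lemma transport n (K : vec n -> Prop) (x y : vec n) :
  (forall i, x i = y i) -> K x -> K y.
Proof. by move=> /vec_ext ->. Qed.

Lemma nonzero_coord n (d : vec n) : d <> @vzero n -> exists i, d i <> 0.
Proof.
move=> Hd; apply: NNPP => Hall; apply: Hd; apply: vec_ext => i.
by apply: NNPP => Hi; apply: Hall; exists i.
Qed.

Lemma sum_scale k c (F : 'I_k -> R) :
  \big[Rplus/0]_(i < k) (c * F i) = c * \big[Rplus/0]_(i < k) F i.
Proof. by symmetry; apply: (big_morph (Rmult c)) => [x y|]; ring. Qed.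

Lemma sum_add k (F G : 'I_k -> R) :
  \big[Rplus/0]_(i < k) (F i + G i) =
  \big[Rplus/0]_(i < k) F i + \big[Rplus/0]_(i < k) G i.
Proof. exact: big_split. Qed.

Lemma sum_ge0 k (F : 'I_k -> R) :
  (forall i, 0 <= F i) -> 0 <= \big[Rplus/0]_(i < k) F i.
Proof. by move=> H; apply/RleP; apply: sumr_ge0 => i _; apply/RleP. Qed.

Lemma sum_le k (F G : 'I_k -> R) :
  (forall i, F i <= G i) -> \big[Rplus/0]_(i < k) F i <= \big[Rplus/0]_(i < k) G i.
Proof. by move=> H; apply/RleP; apply: ler_sum => i _; apply/RleP. Qed.

Lemma sum_abs_le k (F : 'I_k -> R) :
  Rabs (\big[Rplus/0]_(i < k) F i) <= \big[Rplus/0]_(i < k) Rabs (F i).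
Proof.
apply: (big_ind2 (fun s t => Rabs s <= t)) => [|x1 x2 y1 y2 H1 H2|i _].
- by rewrite Rabs_R0; lra.
- by apply: Rle_trans (Rabs_triang _ _) _; lra.
- exact: Rle_refl.
Qed.

Lemma sum_ge_term k (F : 'I_k -> R) (j : 'I_k) :
  (forall i, 0 <= F i) -> F j <= \big[Rplus/0]_(i < k) F i.
Proof.
by move=> H; apply/RleP; rewrite (bigD1 j) //= lerDl; apply: sumr_ge0 => i _; apply/RleP.
Qed.

Lemma apply_fun_addl n (c1 c2 x : vec n) :
  apply_fun (vadd c1 c2) x = apply_fun c1 x + apply_fun c2 x.
Proof. by rewrite /apply_fun -sum_add; apply: eq_bigr => i _; rewrite /vadd; ring. Qed.

Lemma apply_fun_addr n (c x y : vec n) :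
  apply_fun c (vadd x y) = apply_fun c x + apply_fun c y.
Proof. by rewrite /apply_fun -sum_add; apply: eq_bigr => i _; rewrite /vadd; ring. Qed.

Lemma apply_fun_scalel n a (c x : vec n) :
  apply_fun (vscale a c) x = a * apply_fun c x.
Proof. by rewrite /apply_fun -sum_scale; apply: eq_bigr => i _; rewrite /vscale; ring. Qed.

Lemma apply_fun_unitv n (c : vec n) (j : 'I_n) : apply_fun c (unitv j) = c j.
Proof.
rewrite /apply_fun (bigD1 j) //= big1 => [|i /negbTE Hi]; rewrite /unitv ?eqxx ?Hi; ring.
Qed.

Lemma apply_unitv_fun n (x : vec n) (j : 'I_n) : apply_fun (unitv j) x = x j.
Proof.
rewrite /apply_fun (bigD1 j) //= big1 => [|i /negbTE Hi]; rewrite /unitv ?eqxx ?Hi; ring.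
Qed.

Lemma apply_fun_ge0 n (c x : vec n) : vnonneg c -> vnonneg x -> 0 <= apply_fun c x.
Proof. by move=> Hc Hx; apply: sum_ge0 => i; apply: Rmult_le_pos. Qed.

Definition lcomb n k (a : nat -> R) (D : nat -> vec n) : vec n :=
  fun i => \big[Rplus/0]_(j < k) (a j * D j i).

Definition free_family n k (D : nat -> vec n) : Prop :=
  forall a, lcomb k a D = @vzero n -> forall j, (j < k)%N -> a j = 0.

Definition in_span n k (D : nat -> vec n) (w : vec n) : Prop :=
  exists a, w = lcomb k a D.

Definition extend_family n k (D : nat -> vec n) (d : vec n) : nat -> vec n :=
  fun j => if j == k then d else D j.

Lemma lcomb_extend n k (D : nat -> vec n) d a :
  lcomb k.+1 a (extend_family k D d) = vadd (lcomb k a D) (vscale (a k) d).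
Proof.
apply: vec_ext => i; rewrite /lcomb big_ord_recr /= /extend_family eqxx.
by congr (_ + _); apply: eq_bigr => j _; rewrite (ltn_eqF (ltn_ord j)).
Qed.

Lemma lcomb_scale n k (D : nat -> vec n) a c :
  lcomb k (fun j => c * a j) D = vscale c (lcomb k a D).
Proof. by apply: vec_ext => i; rewrite /lcomb /vscale -sum_scale; apply: eq_bigr => j _; ring. Qed.

(* A free family in R^n has at most n members: a k x n matrix with k > n has a
   nonzero vector in its left kernel. *)
Lemma free_family_size n k (D : nat -> vec n) : free_family k D -> (k <= n)%N.
Proof.
move=> Hfree; rewrite leqNgt; apply/negP => Hnk.
pose A : 'M[R]_(k, n) := (\matrix_(j, i) D j i)%R.
have /matrix0Pn [r [j0 Hj0]] : kermx A != 0%R.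
  by rewrite -mxrank_eq0 mxrank_ker subn_eq0 -ltnNge (leq_ltn_trans (rank_leq_col A)).
pose a l := if insub l is Some j then kermx A r j else 0.
have aE (j : 'I_k) : a j = kermx A r j by rewrite /a valK.
have Ha : lcomb k a D = @vzero n.
  apply: vec_ext => i; transitivity ((kermx A *m A)%R r i); last by rewrite mulmx_ker mxE.
  by rewrite /lcomb mxE; apply: (@eq_bigr R 0 Rplus) => j _; rewrite aE [A j i]mxE.
by move: Hj0; rewrite -aE (Hfree a Ha j0 (ltn_ord j0)) eqxx.
Qed.

Lemma cc_single n (P : vec n -> Prop) (x : vec n) : P x -> convex_comb_of P x.
Proof.
move=> Hx; exists 1%N, (fun _ => 1), (fun _ => x); split; [|split; [|split]].
- by move=> _; lra.
- by rewrite big_ord1.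
- by [].
- by move=> i; rewrite big_ord1; ring.
Qed.

Lemma cc_mix n (P : vec n -> Prop) (x y z : vec n) al : 0 <= al <= 1 ->
  convex_comb_of P y -> convex_comb_of P z ->
  x = vadd (vscale al y) (vscale (1 - al) z) -> convex_comb_of P x.
Proof.
move=> Hal [k1 [l1 [p1 [Hl1 [Hs1 [Hp1 Hy]]]]]] [k2 [l2 [p2 [Hl2 [Hs2 [Hp2 Hz]]]]]] ->.
pose lam j := match split j with inl j1 => al * l1 j1 | inr j2 => (1 - al) * l2 j2 end.
pose p j := match split j with inl j1 => p1 j1 | inr j2 => p2 j2 end.
have split_l (j : 'I_k1) : split (lshift k2 j) = inl j by exact: (unsplitK (inl j)).
have split_r (j : 'I_k2) : split (rshift k1 j) = inr j by exact: (unsplitK (inr j)).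
have sum_split (F : 'I_(k1 + k2) -> R) : \big[Rplus/0]_(j < k1 + k2) F j =
    \big[Rplus/0]_(j < k1) F (lshift k2 j) + \big[Rplus/0]_(j < k2) F (rshift k1 j).
  exact: big_split_ord.
exists (k1 + k2)%N, lam, p; split; [|split; [|split]].
- by move=> j; rewrite /lam; case: split => j'; [have := Hl1 j' | have := Hl2 j']; nra.
- rewrite sum_split /lam.
  under eq_bigr => j _ do rewrite split_l; under [X in _ + X]eq_bigr => j _ do rewrite split_r.
  by rewrite !sum_scale Hs1 Hs2; ring.
- by move=> j; rewrite /p; case: split.
- move=> i; rewrite /vadd /vscale Hy Hz sum_split /lam /p.
  under [X in _ = X + _]eq_bigr => j _ do rewrite split_l.
  under [X in _ = _ + X]eq_bigr => j _ do rewrite split_r.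
  by rewrite -!sum_scale; congr (_ + _); apply: eq_bigr => j _; ring.
Qed.

(** Minkowski's theorem *)

Definition convex_set n (K : vec n -> Prop) : Prop :=
  forall y z t, K y -> K z -> 0 <= t <= 1 -> K (vadd (vscale t y) (vscale (1 - t) z)).

Definition line_maxima n (K : vec n -> Prop) : Prop :=
  forall u d, K u -> d <> @vzero n -> exists s, K (vadd u (vscale s d)) /\
    forall s', s < s' -> ~ K (vadd u (vscale s' d)).

Definition internal_dir n (K : vec n -> Prop) (u w : vec n) : Prop :=
  exists2 t, 0 < t & forall s, Rabs s <= t -> K (vadd u (vscale s w)).

Definition span_avoids n (K : vec n -> Prop) k (D : nat -> vec n) (u : vec n) : Prop :=
  forall w, internal_dir K u w -> in_span k D w -> w = @vzero n.

Section Minkowski.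
Variables (n : nat) (K : vec n -> Prop).
Hypothesis K_convex : convex_set K.

Lemma internal_dir_add u w1 w2 :
  internal_dir K u w1 -> internal_dir K u w2 -> internal_dir K u (vadd w1 w2).
Proof.
move=> [t1 Ht1 H1] [t2 Ht2 H2].
have Hm1 := Rmin_l t1 t2; have Hm2 := Rmin_r t1 t2; have Hm := Rmin_pos _ _ Ht1 Ht2.
exists (Rmin t1 t2 / 2) => [|s Hs]; first lra.
have Habs : Rabs (2 * s) <= Rmin t1 t2 by rewrite Rabs_mult Rabs_right; lra.
have := K_convex (t := / 2) (H1 (2 * s) ltac:(lra)) (H2 (2 * s) ltac:(lra)) ltac:(lra).
by apply: transport => i; rewrite /vadd /vscale; field.
Qed.

Lemma internal_dir_scale u w c : c <> 0 -> internal_dir K u w -> internal_dir K u (vscale c w).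
Proof.
move=> Hc [t Ht H]; have Hc' := Rabs_pos_lt c Hc.
exists (t / Rabs c) => [|s Hs]; first exact: Rdiv_lt_0_compat.
have Hsc : Rabs (s * c) <= t.
  rewrite Rabs_mult; apply: (Rmult_le_reg_r (/ Rabs c)); first exact: Rinv_0_lt_compat.
  by rewrite Rmult_assoc Rinv_r; [rewrite Rmult_1_r|lra].
by have := H _ Hsc; apply: transport => i; rewrite /vadd /vscale; ring.
Qed.

Lemma internal_dir_inherit u up um al w : 0 < al <= 1 -> K um ->
  u = vadd (vscale al up) (vscale (1 - al) um) ->
  internal_dir K up w -> internal_dir K u w.
Proof.
move=> Hal Kum -> [t Ht H]; exists (al * t) => [|s Hs]; first nra.
have Hs' : Rabs (s / al) <= t.
  rewrite Rabs_mult Rabs_inv (Rabs_right al); last lra.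
  apply: (Rmult_le_reg_r al); first lra.
  by rewrite Rmult_assoc Rinv_l; lra.
have := K_convex (t := al) (H _ Hs') Kum ltac:(lra).
by apply: transport => i; rewrite /vadd /vscale; field; lra.
Qed.

(* A point of K that is not extreme has a nonzero two-sided direction, namely
   y - z for any segment [y, z] of K having u in its relative interior. *)
Lemma not_extreme_internal_dir u : K u -> ~ extreme_point K u ->
  exists2 d, internal_dir K u d & d <> @vzero n.
Proof.
move=> Ku Hne; apply: NNPP => Hnone; apply: Hne; split => // y z t Ky Kz Ht Hu.
apply: vec_ext => i; apply: NNPP => Hyz; apply: Hnone.
exists (vadd y (vscale (-1) z)); last first.
  by move=> /(congr1 (fun v => v i)); rewrite /vadd /vscale /vzero; lra.
have Hm1 := Rmin_l t (1 - t); have Hm2 := Rmin_r t (1 - t).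
exists (Rmin t (1 - t)) => [|s Hs]; first by apply: Rmin_pos; lra.
have Hs1 := Rle_abs s; have Hs2 := Rle_abs (- s); rewrite Rabs_Ropp in Hs2.
have := K_convex (t := t + s) Ky Kz ltac:(lra).
by apply: transport => j; rewrite Hu /vadd /vscale; ring.
Qed.

Lemma free_extend k D u d : free_family k D -> span_avoids K k D u ->
  internal_dir K u d -> d <> @vzero n -> free_family k.+1 (extend_family k D d).
Proof.
move=> Hfree Havoid Hd Hd0 a Ha.
have Hsum : vadd (lcomb k a D) (vscale (a k) d) = @vzero n by rewrite -lcomb_extend.
have Hak : a k = 0.
  apply: NNPP => Hak; apply: Hd0; apply: Havoid => //.
  exists (fun j => - / a k * a j); rewrite lcomb_scale; apply: vec_ext => i.
  have := congr1 (fun v => v i) Hsum; rewrite /vadd /vscale /vzero => Hi.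
  have -> : lcomb k a D i = - (a k * d i) by lra.
  by field.
have HD : lcomb k a D = @vzero n.
  by apply: vec_ext => i; have := congr1 (fun v => v i) Hsum; rewrite /vadd /vscale Hak; lra.
by move=> j; rewrite ltnS leq_eqVlt => /orP [/eqP -> //|]; apply: Hfree.
Qed.

Lemma avoids_extend k D u v d : internal_dir K u d ->
  (forall w, internal_dir K v w -> internal_dir K u w) -> ~ internal_dir K v d ->
  span_avoids K k D u -> span_avoids K k.+1 (extend_family k D d) v.
Proof.
move=> Hd Hsub Hvd Havoid w Hw [a Ha].
have [Hak|Hak] := Req_dec (a k) 0.
  apply: Havoid; first exact: Hsub.
  by exists a; rewrite Ha lcomb_extend Hak; apply: vec_ext => i; rewrite /vadd /vscale; ring.
exfalso; apply: Hvd.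
have Hw0 : vadd w (vscale (- a k) d) = @vzero n.
  apply: Havoid; first by apply: internal_dir_add (Hsub _ Hw) (internal_dir_scale _ Hd); lra.
  by exists a; rewrite Ha lcomb_extend; apply: vec_ext => i; rewrite /vadd /vscale; ring.
have -> : d = vscale (/ a k) w.
  apply: vec_ext => i; have := congr1 (fun f => f i) Hw0; rewrite /vadd /vscale /vzero => Hi.
  have -> : w i = a k * d i by lra.
  by field.
exact: internal_dir_scale (Rinv_neq_0_compat _ Hak) Hw.
Qed.

Lemma last_point_not_internal u d s :
  (forall s', s < s' -> ~ K (vadd u (vscale s' d))) -> ~ internal_dir K (vadd u (vscale s d)) d.
Proof.
move=> Hlast [t Ht Hin]; apply: (Hlast (s + t)); first lra.
by have := Hin t ltac:(rewrite Rabs_right; lra); apply: transport => i; rewrite /vadd /vscale; ring.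
Qed.

Hypothesis K_lines : line_maxima K.

Lemma segment_ends u d : K u -> internal_dir K u d -> d <> @vzero n ->
  exists up um al, [/\ K up, K um, 0 < al < 1 & u = vadd (vscale al up) (vscale (1 - al) um)]
    /\ ~ internal_dir K up d /\ ~ internal_dir K um d.
Proof.
move=> Ku Hd Hd0.
have Hnd0 : vscale (-1) d <> @vzero n.
  move=> H; apply: Hd0; apply: vec_ext => i.
  by have := congr1 (fun v => v i) H; rewrite /vscale /vzero; lra.
have [sp [Kp Hp]] := K_lines Ku Hd0.
have [sm [Km Hm]] := K_lines Ku Hnd0.
case: (Hd) => [t Ht Hin].
have Htp : t <= sp by apply: Rnot_lt_le => Hlt; apply: (Hp t Hlt); apply: Hin; rewrite Rabs_right; lra.
have Htm : t <= sm.
  apply: Rnot_lt_le => Hlt; apply: (Hm t Hlt).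
  have := Hin (- t) ltac:(rewrite Rabs_Ropp Rabs_right; lra).
  by apply: transport => i; rewrite /vadd /vscale; ring.
exists (vadd u (vscale sp d)), (vadd u (vscale sm (vscale (-1) d))), (sm / (sp + sm)).
split; [split => //|split].
- split; first by apply: Rdiv_lt_0_compat; lra.
  by apply: (Rmult_lt_reg_r (sp + sm)); [lra|rewrite /Rdiv Rmult_assoc Rinv_l; lra].
- by apply: vec_ext => i; rewrite /vadd /vscale; field; lra.
- exact: last_point_not_internal.
- move=> /(internal_dir_scale (c := -1) ltac:(lra)).
  exact: last_point_not_internal.
Qed.

Lemma minkowski_descent m : forall k D u, (n <= k + m)%N -> K u ->
  free_family k D -> span_avoids K k D u -> convex_comb_of (extreme_point K) u.
Proof.
elim: m => [|m IH] k D u Hnk Ku Hfree Havoid;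
  (have [Hext|Hnext] := classic (extreme_point K u); first exact: cc_single);
  have [d Hd Hd0] := not_extreme_internal_dir Ku Hnext;
  have Hfree' := free_extend Hfree Havoid Hd Hd0.
- by have := free_family_size Hfree'; rewrite addn0 in Hnk; rewrite ltnNge Hnk.
- have [up [um [al [[Kp Km Hal Hu] [Hnp Hnm]]]]] := segment_ends Ku Hd Hd0.
  have Hu' : u = vadd (vscale (1 - al) um) (vscale (1 - (1 - al)) up).
    by rewrite Hu; apply: vec_ext => i; rewrite /vadd /vscale; ring.
  have Hnk' : (n <= k.+1 + m)%N by rewrite addSnnS.
  apply: (cc_mix (al := al) _ _ _ Hu); first lra.
  + apply: IH Hnk' Kp Hfree' _.
    apply: avoids_extend Hd _ Hnp Havoid => w.
    by apply: internal_dir_inherit Km Hu; lra.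
  + apply: IH Hnk' Km Hfree' _.
    apply: avoids_extend Hd _ Hnm Havoid => w.
    by apply: internal_dir_inherit Kp Hu'; lra.
Qed.

Theorem minkowski u : K u -> convex_comb_of (extreme_point K) u.
Proof.
move=> Ku; apply: (@minkowski_descent n 0 (fun _ => @vzero n)) => // w _ [a ->].
by apply: vec_ext => i; rewrite /lcomb big_ord0.
Qed.

End Minkowski.

Lemma lipschitz_bound_closed (phi : R -> R) (L B s0 : R) : 0 <= L ->
  (forall s, phi s0 <= phi s + L * Rabs (s0 - s)) ->
  (forall del, 0 < del -> exists s, s0 - del < s <= s0 /\ phi s <= B) -> phi s0 <= B.
Proof.
move=> HL Hlip Happrox; apply: Rnot_lt_le => Hgt.
have [e He_def] : exists e, e = phi s0 - B by eexists.
have He : 0 < e / (L + 1) by apply: Rdiv_lt_0_compat; lra.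
have [s [Hs Hphi]] := Happrox _ He.
have := Hlip s; rewrite Rabs_right; last lra.
have : L * (s0 - s) <= L * (e / (L + 1)) by apply: Rmult_le_compat_l; lra.
have -> : L * (e / (L + 1)) = e - e / (L + 1) by field; lra.
lra.
Qed.

Lemma le_div_of_abs_mul s c M : 0 < c -> Rabs s * c <= M -> s <= M / c.
Proof.
move=> Hc HM; apply: (Rmult_le_reg_r c) => //.
rewrite /Rdiv Rmult_assoc Rinv_l; last lra.
by have := Rle_abs s; nra.
Qed.

(* Completeness of R: a set meeting every line of R^n in a bounded set,
   closed along each line, has a last point on every ray. *)
Lemma line_maxima_of n (K : vec n -> Prop) :
  (forall u d, K u -> d <> @vzero n ->
     exists B, forall s, K (vadd u (vscale s d)) -> s <= B) ->
  (forall u d s0, (forall del, 0 < del ->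
     exists s, K (vadd u (vscale s d)) /\ s0 - del < s <= s0) ->
     K (vadd u (vscale s0 d))) ->
  line_maxima K.
Proof.
move=> Hbounded Hclosed u d Ku Hd.
have [B HB] := Hbounded u d Ku Hd.
pose E s := K (vadd u (vscale s d)).
have E0 : E 0 by apply: transport Ku => i; rewrite /vadd /vscale; ring.
have [m [Hub Hlub]] := completeness E (ex_intro _ B HB) (ex_intro _ 0 E0).
exists m; split; last by move=> s' Hs' /Hub; lra.
apply: Hclosed => del Hdel; apply: NNPP => Hnone.
suff : m <= m - del by lra.
apply: Hlub => s Es; apply: Rnot_lt_le => Hlt; apply: Hnone.
by exists s; split => //; split => //; apply: Hub.
Qed.

Section Norm.
Variables (n : nat) (N : vec n -> R).
Hypothesis N_norm : is_norm N.

Lemma norm_ge0 x : 0 <= N x.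
Proof. by case: N_norm => H _. Qed.

Lemma norm_scale a x : N (vscale a x) = Rabs a * N x.
Proof. by case: N_norm => _ [_ [H _]]. Qed.

Lemma norm_triangle x y : N (vadd x y) <= N x + N y.
Proof. by case: N_norm => _ [_ [_ H]]. Qed.

Lemma norm_zero : N (@vzero n) = 0.
Proof.
have -> : @vzero n = vscale 0 (@vzero n) by apply: vec_ext => i; rewrite /vscale /vzero; ring.
by rewrite norm_scale Rabs_R0 Rmult_0_l.
Qed.

Lemma norm_pos d : d <> @vzero n -> 0 < N d.
Proof.
move=> Hd; case: (Rle_lt_or_eq_dec _ _ (norm_ge0 d)) => // H.
by case: N_norm => _ [Hdef _]; case: Hd; apply: Hdef.
Qed.

Lemma norm_convex y z t : 0 <= t <= 1 ->
  N (vadd (vscale t y) (vscale (1 - t) z)) <= t * N y + (1 - t) * N z.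
Proof.
move=> Ht; apply: Rle_trans (norm_triangle _ _) _.
by rewrite !norm_scale !Rabs_right; lra.
Qed.

Lemma norm_cc k (lam : 'I_k -> R) (p : 'I_k -> vec n) : (forall j, 0 <= lam j) ->
  N (fun i => \big[Rplus/0]_(j < k) (lam j * p j i)) <=
  \big[Rplus/0]_(j < k) (lam j * N (p j)).
Proof.
move=> Hlam.
have -> : (fun i => \big[Rplus/0]_(j < k) (lam j * p j i)) =
          \big[@vadd n/@vzero n]_(j < k) vscale (lam j) (p j).
  by apply: vec_ext => i; symmetry; apply: (big_morph (fun v : vec n => v i)).
apply: (big_ind2 (fun v r => N v <= r)) => [|v1 v2 r1 r2 H1 H2|j _].
- by rewrite norm_zero; lra.
- by apply: Rle_trans (norm_triangle _ _) _; lra.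
- by rewrite norm_scale Rabs_right; [lra|apply: Rle_ge].
Qed.

(* B_X is convex and, being bounded and closed, has last points on rays. *)
Lemma ball_convex : convex_set (unit_ball N).
Proof.
move=> y z t Hy Hz Ht; rewrite /unit_ball in Hy Hz *.
by apply: Rle_trans (norm_convex _ _ Ht) _; nra.
Qed.

Lemma ball_line_maxima : line_maxima (unit_ball N).
Proof.
apply: line_maxima_of => [u d Hu Hd|u d s0 Happrox].
- have Hd0 := norm_pos Hd.
  exists (2 / N d) => s Hs; apply: le_div_of_abs_mul => //.
  rewrite /unit_ball in Hu Hs; rewrite -norm_scale.
  have -> : vscale s d = vadd (vadd u (vscale s d)) (vscale (-1) u).
    by apply: vec_ext => i; rewrite /vadd /vscale; ring.
  apply: Rle_trans (norm_triangle _ _) _.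
  by rewrite norm_scale Rabs_Ropp Rabs_R1; lra.
- apply: (lipschitz_bound_closed (phi := fun s => N (vadd u (vscale s d))) (norm_ge0 d)).
  + move=> s; rewrite Rmult_comm -norm_scale.
    apply: Rle_trans (norm_triangle _ _); right; congr N.
    by apply: vec_ext => i; rewrite /vadd /vscale; ring.
  + move=> del /Happrox [s [Ks Hs]]; exists s; split => //.
Qed.

Hypothesis N_absolute : absolute_norm N.

Lemma norm_abs_eq x y : (forall i, Rabs (x i) = Rabs (y i)) -> N x = N y.
Proof.
case: N_absolute => Habs _ Hxy; rewrite (Habs x) (Habs y); congr N.
exact: vec_ext.
Qed.

(* |x_j| <= N x: zeroing the coordinates i < m, i <> j, one at a time
   averages x with a sign-flipped copy, which does not increase N. *)
Lemma coord_le x (j : 'I_n) : Rabs (x j) <= N x.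
Proof.
pose z (m : nat) : vec n := fun i => if (i < m)%N && (i != j) then 0 else x i.
have Hz m : N (z m) <= N x.
  elim: m => [|m IH].
    by right; congr N; apply: vec_ext => i; rewrite /z ltn0.
  pose w : vec n := fun i => if (i == m :> nat) && (i != j) then - z m i else z m i.
  have Hw : N w = N (z m).
    by apply: norm_abs_eq => i; rewrite /w; case: ifP => _ //; exact: Rabs_Ropp.
  have -> : z m.+1 = vadd (vscale (/ 2) (z m)) (vscale (1 - / 2) w).
    apply: vec_ext => i; rewrite /vadd /vscale /w /z ltnS leq_eqVlt.
    by case: (i == m :> nat); case: (i < m)%N; case: (i != j) => /=; field.
  by apply: Rle_trans (norm_convex _ _ _) _; [lra|rewrite Hw; lra].
have := Hz n.
have -> : z n = vscale (x j) (unitv j).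
  apply: vec_ext => i; rewrite /z /vscale /unitv ltn_ord /=.
  by case: (eqVneq i j) => [->|_] /=; ring.
by rewrite norm_scale (proj2 N_absolute) Rmult_1_r.
Qed.

End Norm.

(* For any function N, the set B_{X*} of functionals bounded by N is convex,
   and bounded and closed along lines (|c_j| <= N e_j). *)
Lemma dual_convex n (N : vec n -> R) : convex_set (dual_ball N).
Proof.
move=> y z t Hy Hz Ht x; rewrite apply_fun_addl !apply_fun_scalel.
apply: Rle_trans (Rabs_triang _ _) _.
rewrite !Rabs_mult (Rabs_right t) ?(Rabs_right (1 - t)); try lra.
by have := Hy x; have := Hz x; nra.
Qed.

Lemma dual_line_maxima n (N : vec n -> R) : line_maxima (dual_ball N).
Proof.
apply: line_maxima_of => [u d Hu /nonzero_coord [j Hj]|u d s0 Happrox x].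
- have Hdj := Rabs_pos_lt _ Hj.
  exists ((N (unitv j) + Rabs (u j)) / Rabs (d j)) => s Hs.
  apply: le_div_of_abs_mul => //; rewrite -Rabs_mult.
  have := Hs (unitv j); rewrite apply_fun_addl apply_fun_scalel !apply_fun_unitv.
  have := Rabs_triang (u j + s * d j) (- u j); rewrite Rabs_Ropp.
  have -> : u j + s * d j + - u j = s * d j by ring.
  lra.
- apply: (lipschitz_bound_closed
    (phi := fun s => Rabs (apply_fun (vadd u (vscale s d)) x)) (Rabs_pos (apply_fun d x))).
  + move=> s; rewrite !apply_fun_addl !apply_fun_scalel -Rabs_mult.
    apply: Rle_trans (Rabs_triang _ _); right; congr Rabs; ring.
  + by move=> del /Happrox [s [Ks Hs]]; exists s; split => //; apply: Ks.
Qed.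

(** Sign changes and extreme points *)

Definition sign_of n (q : vec n) : vec n := fun i => if Rlt_dec (q i) 0 then -1 else 1.
Definition flip n (s v : vec n) : vec n := fun i => s i * v i.

Lemma flip_sign_abs n (q : vec n) : flip (sign_of q) q = vabs q.
Proof.
apply: vec_ext => i; rewrite /flip /sign_of /vabs.
by case: Rlt_dec => H /=; [rewrite Rabs_left|rewrite Rabs_right]; lra.
Qed.

Lemma flip_signK n (q v : vec n) : flip (sign_of q) (flip (sign_of q) v) = v.
Proof. by apply: vec_ext => i; rewrite /flip /sign_of; case: Rlt_dec => ? /=; ring. Qed.

Lemma abs_flip_sign n (q v : vec n) i : Rabs (flip (sign_of q) v i) = Rabs (v i).
Proof.
by rewrite /flip /sign_of Rabs_mult; case: Rlt_dec => ? /=; rewrite ?Rabs_Ropp Rabs_R1; ring.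
Qed.

Lemma extreme_abs n (K : vec n -> Prop) (q : vec n) :
  (forall v, K v -> K (flip (sign_of q) v)) -> extreme_point K q -> extreme_point K (vabs q).
Proof.
move=> Hflip [Kq Hq]; split; first by rewrite -flip_sign_abs; apply: Hflip.
move=> y z t Ky Kz Ht Habs.
suff : flip (sign_of q) y = flip (sign_of q) z by move=> /(congr1 (flip (sign_of q))); rewrite !flip_signK.
apply: Hq (Hflip _ Ky) (Hflip _ Kz) Ht _.
transitivity (flip (sign_of q) (vabs q)); first by rewrite -flip_sign_abs flip_signK.
rewrite Habs.
by apply: vec_ext => i; rewrite /flip /vadd /vscale; ring.
Qed.

Lemma ball_flip n (N : vec n -> R) (q v : vec n) : absolute_norm N ->
  unit_ball N v -> unit_ball N (flip (sign_of q) v).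
Proof. by move=> HA; rewrite /unit_ball (norm_abs_eq HA (abs_flip_sign q v)). Qed.

Lemma dual_flip n (N : vec n -> R) (q c : vec n) : absolute_norm N ->
  dual_ball N c -> dual_ball N (flip (sign_of q) c).
Proof.
move=> HA Hc x.
have -> : apply_fun (flip (sign_of q) c) x = apply_fun c (flip (sign_of q) x).
  by apply: eq_bigr => i _; rewrite /flip; ring.
by rewrite -(norm_abs_eq HA (abs_flip_sign q x)); apply: Hc.
Qed.

(** Points of upper monotonicity *)

Definition pos_extreme n (S : vec n -> Prop) (p : vec n) : Prop :=
  extreme_point S p /\ vnonneg p.

Lemma cc_nonneg n (S : vec n -> Prop) x : convex_comb_of (pos_extreme S) x -> vnonneg x.
Proof.
move=> [k [lam [p [Hlam [_ [Hp Hx]]]]]] i; rewrite Hx.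
by apply: sum_ge0 => j; apply: Rmult_le_pos => //; apply: (proj2 (Hp j)).
Qed.

Section UpperMonotone.
Variables (n : nat) (N : vec n -> R).
Hypotheses (N_norm : is_norm N) (N_absolute : absolute_norm N).

(* (=>): write x as a convex combination of extreme points q_j of B_X; then
   w = sum lam_j |q_j| dominates x = |x| and N w <= 1, so by upper
   monotonicity w = x. *)
Lemma upper_monotone_cc x :
  upper_monotone_point N x -> convex_comb_of (pos_extreme (unit_ball N)) x.
Proof.
move=> [Hsph [Hx Hstrict]].
have Hball : unit_ball N x by rewrite /unit_ball Hsph; lra.
have [k [lam [q [Hlam [Hsum [Hq Hxq]]]]]] :=
  minkowski (ball_convex N_norm) (ball_line_maxima N_norm) Hball.
exists k, lam, (fun j => vabs (q j)); split => //; split => //; split.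
  move=> j; split; last by move=> i; apply: Rabs_pos.
  by apply: extreme_abs (Hq j) => v; apply: ball_flip.
pose w : vec n := fun i => \big[Rplus/0]_(j < k) (lam j * vabs (q j) i).
have Hxw i : x i <= w i.
  rewrite Hxq; apply: Rle_trans (Rle_abs _) _; apply: Rle_trans (sum_abs_le _) _.
  by right; apply: eq_bigr => j _; rewrite Rabs_mult Rabs_right //; apply: Rle_ge.
have Hw : N w <= 1.
  apply: Rle_trans (norm_cc N_norm _ Hlam) _; rewrite -Hsum; apply: sum_le => j.
  have := proj1 (Hq j); rewrite /unit_ball -(proj1 N_absolute (q j)).
  by have := Hlam j; nra.
pose y := vadd w (vscale (-1) x).
have Hy : vnonneg y by move=> i; rewrite /y /vadd /vscale; have := Hxw i; lra.
have Hxy : vadd x y = w by apply: vec_ext => i; rewrite /y /vadd /vscale; ring.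
have [Hy0|Hy0] := classic (y = @vzero n).
  by move=> i; have := congr1 (fun v => v i) Hy0; rewrite /y /vadd /vscale /vzero /w; lra.
by have := Hstrict y Hy Hy0; rewrite Hxy Hsph; lra.
Qed.

(* Each coordinate functional e_i lies in B_{X*}; by Minkowski one of the
   extreme points of B_{X*} representing it has c_i <> 0, and |c| is again
   extreme. *)
Lemma dual_extreme_coord (i : 'I_n) : exists c, pos_extreme (dual_ball N) c /\ 0 < c i.
Proof.
have Hei : dual_ball N (unitv i).
  by move=> x; rewrite apply_unitv_fun; apply: coord_le.
have [k [mu [c [Hmu [Hsum [Hc Hei_c]]]]]] :=
  minkowski (@dual_convex n N) (@dual_line_maxima n N) Hei.
have [j Hj] : exists j, c j i <> 0.
  apply: NNPP => Hall.
  have Hzero : \big[Rplus/0]_(j < k) (mu j * c j i) = 0.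
    apply: big1 => j _; have -> : c j i = 0 by apply: NNPP => Hji; apply: Hall; exists j.
    ring.
  by have := Hei_c i; rewrite Hzero /unitv eqxx; lra.
exists (vabs (c j)); split; [split|].
- by apply: extreme_abs (Hc j) => v; apply: dual_flip.
- by move=> l; apply: Rabs_pos.
- exact: Rabs_pos_lt.
Qed.

Lemma CL_functional_cc c x : CL_space N -> pos_extreme (dual_ball N) c ->
  convex_comb_of (pos_extreme (unit_ball N)) x -> apply_fun c x = 1.
Proof.
move=> HCL [Hc Hc0] [k [lam [p [Hlam [Hsum [Hp Hx]]]]]].
have Hcp j : apply_fun c (p j) = 1.
  have [Hpj Hpj0] := Hp j.
  by rewrite -(HCL c (p j) Hc Hpj) Rabs_right //; apply: Rle_ge; apply: apply_fun_ge0.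
transitivity (\big[Rplus/0]_(i < n) \big[Rplus/0]_(j < k) (c i * (lam j * p j i))).
  by apply: eq_bigr => i _; rewrite Hx -sum_scale.
rewrite exchange_big; transitivity (\big[Rplus/0]_(j < k) lam j); last exact: Hsum.
apply: eq_bigr => j _; transitivity (lam j * apply_fun c (p j)); last by rewrite Hcp; ring.
by rewrite /apply_fun -sum_scale; apply: eq_bigr => i _; ring.
Qed.

(* (<=): for y >= 0 with y_i > 0, take c as in dual_extreme_coord; then
   N (x + y) >= c (x + y) = 1 + c y >= 1 + c_i y_i > 1 = N x. *)
Lemma cc_upper_monotone x : CL_space N -> unit_sphere N x ->
  convex_comb_of (pos_extreme (unit_ball N)) x -> upper_monotone_point N x.
Proof.
move=> HCL Hsph Hcc; split => //; split; first exact: cc_nonneg Hcc.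
move=> y Hy /nonzero_coord [i Hi].
have Hyi : 0 < y i by have := Hy i; lra.
have [c [Hc Hci]] := dual_extreme_coord i.
have Hcy : c i * y i <= apply_fun c y.
  apply: (sum_ge_term (F := fun l => c l * y l)) => l.
  by apply: Rmult_le_pos; [apply: (proj2 Hc)|apply: Hy].
have Hcyi := Rmult_lt_0_compat _ _ Hci Hyi.
have := proj1 (proj1 Hc) (vadd x y).
rewrite apply_fun_addr (CL_functional_cc HCL Hc Hcc) Rabs_right; last lra.
by rewrite /unit_sphere in Hsph; rewrite Hsph; lra.
Qed.

End UpperMonotone.

Theorem corollary5p4 (n : nat) (N : vec n -> R) :
  is_norm N -> absolute_norm N -> CL_space N ->
  forall a : vec n, unit_sphere N (vabs a) ->
  (upper_monotone_point N (vabs a) <->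
   convex_comb_of (fun p => extreme_point (unit_ball N) p /\ vnonneg p) (vabs a)).
Proof.
move=> HN HA HCL a Hsph; split.
- exact: (upper_monotone_cc HN HA).
- exact: (cc_upper_monotone HN HA HCL Hsph).
Qed.
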